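(* Let $\mathbb{K}$ be a field of characteristic $0$, $I\subset\mathbb{K}[x_1,\dots,x_n]$ a full monomial ideal with $\mathbb{K}[\mathbf{x}]/I$ finite-dimensional, and $\mathfrak{g}=\operatorname{Der}(\mathbb{K}[\mathbf{x}]/I)=\bigoplus_{\alpha\in\mathbb{Z}^n}\mathfrak{g}_\alpha$ its weight decomposition. Let $\alpha\in\mathbb{Z}^n$. Then: (1) If $\alpha\in\mathbb{Z}_{\ge0}^n$, then $\dim\mathfrak{g}_\alpha=\#E_\alpha$. (2) If $\alpha\notin\mathbb{Z}_{\ge0}^n$, $\alpha+e_k\in\mathbb{Z}_{\ge0}^n$ for some $1\le k\le n$, and $\dim\mathfrak{g}_{\alpha+e_k}=0$, then $\dim\mathfrak{g}_\alpha=\#E_\alpha$; moreover this number equals $1$ if $\alpha+e_k\in\operatorname{supp}^c(I)$ and $0$ otherwise.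
   Context: Let $e_1,\dots,e_n$ be the standard basis of $\mathbb{Z}^n$. For a monomial ideal $I\subset\mathbb{K}[\mathbf{x}]$, $\operatorname{supp}(I)=\{m\in\mathbb{Z}^n_{\ge0}\mid \mathbf{x}^m\in I\}$ and $\operatorname{supp}^c(I)=\mathbb{Z}^n_{\ge0}\setminus\operatorname{supp}(I)$. $I$ is full if $x_i\notin I$ for all $i$. The algebra $\mathbb{K}[\mathbf{x}]/I$ is $\mathbb{Z}^n$-graded with $\bar{\mathbf{x}}^m$ (image of $\mathbf{x}^m$) of degree $m$, equivalently the torus $T=\mathbb{G}_m^n$ acts by $\mathbf{t}\cdot x_i=t_ix_i$. $\operatorname{Der}(\mathbb{K}[\mathbf{x}]/I)$ is the Lie algebra of $\mathbb{K}$-derivations (equal to the Lie algebra of $\operatorname{Aut}_{\mathbb{K}}(\mathbb{K}[\mathbf{x}]/I)$), and for $\alpha\in\mathbb{Z}^n$, $\mathfrak{g}_\alpha$ is the weight space for the adjoint action of $T$, i.e. the space of derivations $\partial$ with $\partial(\bar{\mathbf{x}}^m)\in\mathbb{K}\,\bar{\mathbf{x}}^{m+\alpha}$ for all $m\in\mathbb{Z}^n_{\ge0}$ (where $\bar{\mathbf{x}}^{m+\alpha}:=0$ if $m+\alpha\notin\mathbb{Z}^n_{\ge0}$). For $\alpha\in\mathbb{Z}^n$, $E_\alpha:=\{e_i\mid \alpha+e_i\in\operatorname{supp}^c(I)\}$. *)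

From HB Require Import structures.
From mathcomp Require Import all_boot all_order all_algebra.
From mathcomp Require Import mpoly.
Set Implicit Arguments. Unset Strict Implicit. Unset Printing Implicit Defensive.
Import Order.TTheory GRing.Theory Num.Theory.
Local Open Scope ring_scope.

Section Defs.
Variables (K : fieldType) (n : nat).
Local Notation P := {mpoly K[n]}.
Implicit Types (I : pred P) (D : P -> P).

Definition is_ideal I :=
  [/\ (0 : P) \in I,
      (forall p q, p \in I -> q \in I -> p + q \in I) &
      (forall a p, p \in I -> a * p \in I)].

(** Monomial ideal: an ideal containing every monomial of each of its elements
    (equivalently, an ideal generated by monomials). *)
Definition is_monomial_ideal I :=
  is_ideal I /\
  (forall p, p \in I -> forall m, m \in msupp p -> 'X_[m] \in I).

Definition full_ideal I := forall i : 'I_n, 'X_i \notin I.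

Definition quot_findim I :=
  exists s : seq P, forall p : P,
    exists c : 'I_(size s) -> K, p - \sum_(j < size s) c j *: s`_j \in I.

Definition nonneg (v : 'I_n -> int) := forall i, 0 <= v i.

Definition to_mon (v : 'I_n -> int) : option 'X_{1..n} :=
  if [forall i, 0 <= v i] then Some [multinom absz (v i) | i < n] else None.

(** bar x^v in K[x]/I (represented by a polynomial), := 0 if v is not >= 0. *)
Definition xbar (v : 'I_n -> int) : P :=
  if to_mon v is Some m then 'X_[m] else 0.

Definition in_suppc I (v : 'I_n -> int) : bool :=
  if to_mon v is Some m then 'X_[m] \notin I else false.

Definition vadd_int (a b : 'I_n -> int) : 'I_n -> int := fun i => a i + b i.
Definition unitv (k : 'I_n) : 'I_n -> int := fun i => (i == k)%:R.
Definition mon_int (m : 'X_{1..n}) : 'I_n -> int := fun i => (m i)%:Z.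

(** A K-linear self-map of K[x]/I, given through a map on representatives
    that respects congruence modulo I, which is a K-derivation of K[x]/I. *)
Definition is_der_quot I D :=
  [/\ (forall p q, p - q \in I -> D p - D q \in I),
      (forall p q, D (p + q) - (D p + D q) \in I),
      (forall (c : K) p, D (c *: p) - c *: D p \in I) &
      (forall p q, D (p * q) - (p * D q + D p * q) \in I)].

Definition in_weight I (alpha : 'I_n -> int) D :=
  is_der_quot I D /\
  forall m : 'X_{1..n}, exists c : K,
      D 'X_[m] - c *: xbar (vadd_int (mon_int m) alpha) \in I.

(** dim g_alpha = d : there are d elements of g_alpha whose classes (maps on
    K[x]/I) are linearly independent and span g_alpha. *)
Definition weight_dim I (alpha : 'I_n -> int) (d : nat) :=
  exists b : 'I_d -> P -> P,
    [/\ (forall j, in_weight I alpha (b j)),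
        (forall c : 'I_d -> K,
           (forall p, \sum_(j < d) c j *: b j p \in I) -> forall j, c j = 0) &
        (forall D, in_weight I alpha D ->
           exists c : 'I_d -> K, forall p, D p - \sum_(j < d) c j *: b j p \in I)].

Definition E_set I (alpha : 'I_n -> int) : {set 'I_n} :=
  [set i : 'I_n | in_suppc I (vadd_int alpha (unitv i))].

End Defs.

From HB Require Import structures.
From mathcomp Require Import all_boot all_order all_algebra.
From mathcomp Require Import mpoly.
From mathcomp Require Import zify ring.
Import Order.TTheory GRing.Theory Num.Theory.
Local Open Scope ring_scope.
Set Implicit Arguments. Unset Strict Implicit.

(* A derivation of K[x]/I is determined modulo I by the images of the x_i
   (chain rule), and a weight-alpha derivation sends x_i to a multiple c_i of
   bar x^(alpha + e_i).  Hence it is congruent to the combination of the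
   derivations bar x^(alpha + e_i) d/dx_i, in which only the i in E_alpha
   survive, and these are independent (evaluate at x_i).  It remains to see
   that these basic derivations are well defined modulo I and have weight
   alpha: this is clear when alpha >= 0; in the situation of (2) the only
   candidate is i = k, and the vanishing of g_(alpha + e_k) forces
   bar x^(alpha + e_k + e_i) into I for every i, which together with fullness
   makes bar x^(alpha + e_k) d/dx_k kill I. *)

Section IdealClosure.
Variables (K : fieldType) (n : nat) (I : pred {mpoly K[n]}).
Hypothesis idI : is_ideal I.
Local Notation P := {mpoly K[n]}.

Lemma ideal0 : (0 : P) \in I. Proof. by case: idI. Qed.

Lemma idealD p q : p \in I -> q \in I -> p + q \in I.
Proof. by case: idI => _ + _; apply. Qed.

Lemma idealMl a p : p \in I -> a * p \in I.
Proof. by case: idI => _ _; apply. Qed.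

Lemma idealMr a p : p \in I -> p * a \in I.
Proof. by rewrite mulrC; apply: idealMl. Qed.

Lemma idealNE p : (- p \in I) = (p \in I).
Proof. by apply/idP/idP => /(idealMl (-1)); rewrite mulN1r ?opprK. Qed.

Lemma idealZ c p : p \in I -> c *: p \in I.
Proof. by rewrite -mul_mpolyC; apply: idealMl. Qed.

Lemma ideal_sum {T : Type} {r : seq T} {Q : pred T} {F : T -> P} :
  (forall x, Q x -> F x \in I) -> \sum_(x <- r | Q x) F x \in I.
Proof. by move=> FI; elim/big_rec: _ => [|x y /FI]; [exact: ideal0|apply: idealD]. Qed.

End IdealClosure.

Section ChainRule.
Variables (K : fieldType) (n : nat).
Local Notation P := {mpoly K[n]}.
Implicit Types (p q : P) (D : P -> P).

Lemma mderivX_var (i k : 'I_n) : ('X_i : P)^`M(k) = (i == k)%:R.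
Proof.
rewrite mderivX mnm1E; case: eqP => [->|_]; last by rewrite scale0r.
suff -> : (U_(k) - U_(k))%MM = 0%MM by rewrite mpolyX0 scale1r.
by apply/mnmP => l; rewrite mnmBE mnm0E subnn.
Qed.

Definition der_expand D p := \sum_(i < n) p^`M(i) * D 'X_i.

Lemma der_expandD D p q : der_expand D (p + q) = der_expand D p + der_expand D q.
Proof. by rewrite /der_expand -big_split; apply: eq_bigr => i _; rewrite mderivD mulrDl. Qed.

Lemma der_expandM D p q : der_expand D (p * q) = q * der_expand D p + p * der_expand D q.
Proof.
by rewrite /der_expand !mulr_sumr -big_split; apply: eq_bigr => i _ /=; rewrite mderivM; ring.
Qed.

Lemma der_expandC D c : der_expand D c%:MP = 0.
Proof. by rewrite /der_expand big1 // => i _; rewrite mderivC mul0r. Qed.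

Lemma der_expandX D k : der_expand D 'X_k = D 'X_k.
Proof.
rewrite /der_expand (bigD1 k) //= big1 => [|i /negbTE ik].
  by rewrite mderivX_var eqxx mul1r addr0.
by rewrite mderivX_var eq_sym ik mul0r.
Qed.

Variables (I : pred P) (D : P -> P).
Hypotheses (idI : is_ideal I) (derD : is_der_quot I D).

Lemma der_quot_const c : D c%:MP \in I.
Proof.
case: derD => _ DD DZ DM.
have D1 : D 1 \in I.
  by have := DM 1 1; rewrite !mul1r mulr1 opprD addrA subrr sub0r (idealNE idI).
rewrite -[D _](subrK (c *: D 1)) (idealD idI) ?(idealZ idI) //.
by have := DZ c 1; rewrite -alg_mpolyC.
Qed.

Lemma der_quot_expand p : D p - der_expand D p \in I.
Proof.
case: derD => _ DD _ DM.
pose Q p := D p - der_expand D p \in I.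
have QD p1 p2 : Q p1 -> Q p2 -> Q (p1 + p2).
  rewrite /Q der_expandD => h1 h2.
  have -> : D (p1 + p2) - (der_expand D p1 + der_expand D p2)
    = (D (p1 + p2) - (D p1 + D p2))
      + (D p1 - der_expand D p1) + (D p2 - der_expand D p2) by ring.
  apply: (idealD idI) h2; apply: (idealD idI) h1.
  exact: DD.
have QM p1 p2 : Q p1 -> Q p2 -> Q (p1 * p2).
  rewrite /Q der_expandM => h1 h2.
  have -> : D (p1 * p2) - (p2 * der_expand D p1 + p1 * der_expand D p2)
    = (D (p1 * p2) - (p1 * D p2 + D p1 * p2))
      + p2 * (D p1 - der_expand D p1) + p1 * (D p2 - der_expand D p2) by ring.
  apply: (idealD idI) (idealMl idI _ h2); apply: (idealD idI) (idealMl idI _ h1).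
  exact: DM.
have QC c : Q c%:MP by rewrite /Q der_expandC subr0 der_quot_const.
rewrite -/(Q p) (mpolyE p); apply: (big_ind Q _ QD) => [|m _]; first by rewrite -mpolyC0.
rewrite -mul_mpolyC QM // mpolyXE_id; apply: (big_ind Q _ QM) => [|i _].
  by rewrite -mpolyC1.
elim: (m i) => [|k IHk]; first by rewrite expr0 -mpolyC1.
by rewrite exprS QM // /Q der_expandX subrr (ideal0 idI).
Qed.

End ChainRule.

Section ExponentVectors.
Variables (K : fieldType) (n : nat).
Local Notation P := {mpoly K[n]}.
Local Notation xb := (@xbar K n).
Implicit Types (v w : 'I_n -> int).

Lemma nonneg_addu v j : nonneg v -> nonneg (vadd_int v (unitv j)).
Proof. by move=> v0 i; have := v0 i; rewrite /vadd_int /unitv; case: (i == j) => /=; lia. Qed.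

Lemma eq_xbar v w : v =1 w -> xb v = xb w.
Proof.
move=> vw; rewrite /xbar /to_mon (eq_forallb (fun i => congr1 (>= 0) (vw i))).
by case: ifP => // _; congr 'X_[_]; apply/mnmP => i; rewrite !mnmE vw.
Qed.

Lemma xbar_nonneg v : nonneg v -> xb v = 'X_[[multinom absz (v i) | i < n]].
Proof. by move=> v0; rewrite /xbar /to_mon; case: forallP => // []. Qed.

Lemma in_suppc_neg (I : pred P) v : ~ nonneg v -> in_suppc I v = false.
Proof. by move=> v0; rewrite /in_suppc /to_mon; case: forallP. Qed.

Lemma in_suppcE (I : pred P) v : (0 : P) \in I -> in_suppc I v = (xb v \notin I).
Proof. by move=> I0; rewrite /in_suppc /xbar; case: to_mon; rewrite ?I0. Qed.

Lemma xbarD_mon v (m : 'X_{1..n}) : nonneg v -> xb (vadd_int v (mon_int m)) = xb v * 'X_[m].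
Proof.
move=> v0; have vm0 : nonneg (vadd_int v (mon_int m)).
  by move=> i; have := v0 i; rewrite /vadd_int /mon_int; lia.
rewrite !xbar_nonneg // -mpolyXD; congr 'X_[_]; apply/mnmP => i.
by rewrite mnmDE !mnmE /vadd_int /mon_int; have := v0 i; lia.
Qed.

Lemma mon_int_unitv (i : 'I_n) : mon_int U_(i)%MM =1 unitv i.
Proof. by move=> k; rewrite /mon_int /unitv mnm1E eq_sym; case: (k == i). Qed.

End ExponentVectors.

Section BasicDerivations.
Variables (K : fieldType) (n : nat) (I : pred {mpoly K[n]}).
Local Notation P := {mpoly K[n]}.
Local Notation xb := (@xbar K n).
Implicit Types (a b : 'I_n -> int).

Definition xder b (j : 'I_n) (p : P) := xb b * p^`M(j).

Lemma xder_X b j i : xder b j 'X_i = if i == j then xb b else 0.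
Proof. by rewrite /xder mderivX_var; case: eqP; rewrite ?mulr1 ?mulr0. Qed.

Lemma xder_mon a j (m : 'X_{1..n}) : nonneg (vadd_int a (unitv j)) ->
  xder (vadd_int a (unitv j)) j 'X_[m] = (m j)%:R *: xb (vadd_int (mon_int m) a).
Proof.
move=> aj0; rewrite /xder mderivX; case: (posnP (m j)) => [->|mj].
  by rewrite !scale0r mulr0.
rewrite -scalerAr -xbarD_mon //; congr (_ *: _); apply: eq_xbar => i.
rewrite /vadd_int /mon_int /unitv mnmBE mnm1E.
by case: (eqVneq j i) => [<-|_] /=; lia.
Qed.

Hypothesis monI : is_monomial_ideal I.

Lemma xder_der_quot b j :
  (forall m, 'X_[m] \in I -> xder b j 'X_[m] \in I) -> is_der_quot I (xder b j).
Proof.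
case: monI => idI supI xderI.
have xderII p : p \in I -> xder b j p \in I.
  move=> pI; rewrite (mpolyE p) /xder raddf_sum mulr_sumr big_seq.
  apply: (ideal_sum idI) => // m /(supI _ pI) /xderI.
  by rewrite /= mderivZ -scalerAr; apply: (idealZ idI).
split=> [p q pqI|p q|c p|p q].
- by rewrite /xder -mulrBr -mderivB xderII.
- by rewrite /xder mderivD mulrDr subrr (ideal0 idI).
- by rewrite /xder mderivZ -scalerAr subrr (ideal0 idI).
- rewrite /xder mderivM.
  have -> : xb b * (p^`M(j) * q + p * q^`M(j))
            - (p * (xb b * q^`M(j)) + xb b * p^`M(j) * q) = 0 by ring.
  exact: (ideal0 idI).
Qed.

Lemma in_weight_xder_nonneg a j : nonneg a -> in_weight I a (xder (vadd_int a (unitv j)) j).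
Proof.
case: (monI) => idI _ a0; have aj0 : nonneg (vadd_int a (unitv j)) by exact: nonneg_addu.
have xderE m : xder (vadd_int a (unitv j)) j 'X_[m] = (m j)%:R *: (xb a * 'X_[m]).
  rewrite xder_mon // -xbarD_mon //; congr (_ *: _).
  by apply: eq_xbar => i; rewrite /vadd_int addrC.
split=> [|m]; last by exists (m j)%:R; rewrite xder_mon // subrr (ideal0 idI).
by apply: xder_der_quot => m mI; rewrite xderE (idealZ idI) ?(idealMl idI).
Qed.

Lemma weight_dim0_xbar b i : nonneg b -> weight_dim I b 0 -> xb (vadd_int b (unitv i)) \in I.
Proof.
move=> b0 [B [_ _ spanB]].
have [c] := spanB _ (in_weight_xder_nonneg i b0).
by move/(_ 'X_i); rewrite big_ord0 subr0 xder_X eqxx.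
Qed.

Hypothesis fullI : full_ideal I.

Lemma in_weight_xder_shift a k :
  nonneg (vadd_int a (unitv k)) ->
  (forall i, xb (vadd_int (vadd_int a (unitv k)) (unitv i)) \in I) ->
  in_weight I a (xder (vadd_int a (unitv k)) k).
Proof.
case: (monI) => idI _; set b := vadd_int a (unitv k) => b0 bI.
split=> [|m]; last by exists (m k)%:R; rewrite xder_mon // subrr (ideal0 idI).
apply: xder_der_quot => m mI; rewrite xder_mon //.
case: (posnP (m k)) => [->|mk]; first by rewrite scale0r (ideal0 idI).
apply: (idealZ idI).
case: (boolP [exists i, (0 < (m - U_(k))%MM i)%N]) => [/existsP[i mi]|].
  have -> : xb (vadd_int (mon_int m) a)
      = xb (vadd_int (vadd_int b (unitv i)) (mon_int (m - U_(k) - U_(i))%MM)).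
    apply: eq_xbar => l; move: mi mk.
    rewrite /b /vadd_int /mon_int /unitv !mnmBE !mnm1E.
    by case: (eqVneq l k) => [<-|_]; case: (eqVneq l i) => [<-|_] /=; lia.
  by rewrite xbarD_mon ?(idealMr idI) //; apply: nonneg_addu.
move/existsPn => m_le; suff mU : m = U_(k)%MM by have := fullI k; rewrite -mU mI.
apply/mnmP => l; have := m_le l; rewrite mnmBE mnm1E.
by case: (eqVneq k l) => [<-|kl] /=; lia.
Qed.

End BasicDerivations.

Section WeightSpaceDimension.
Variables (K : fieldType) (n : nat) (I : pred {mpoly K[n]}).
Hypothesis idI : is_ideal I.
Local Notation xb := (@xbar K n).
Variable a : 'I_n -> int.
Local Notation E := (E_set I a).
Local Notation ea i := (vadd_int a (unitv i)).

Lemma mem_E_set i : (i \in E) = (xb (ea i) \notin I).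
Proof. by rewrite inE in_suppcE // (ideal0 idI). Qed.

Lemma in_weight_X D : in_weight I a D ->
  exists c : 'I_n -> K, forall i, D 'X_i - c i *: xb (ea i) \in I.
Proof.
case=> _ DX.
apply: (@fin_all_exists _ (fun=> K) (fun i c => D 'X_i - c *: xb (ea i) \in I)) => i.
have [c cX] := DX U_(i)%MM; exists c.
suff -> : xb (ea i) = xb (vadd_int (mon_int U_(i)%MM) a) by [].
by apply: eq_xbar => k; rewrite /vadd_int mon_int_unitv addrC.
Qed.

Lemma in_weight_span D : in_weight I a D ->
  exists c : 'I_n -> K, forall p, D p - \sum_(i in E) c i *: xder (ea i) i p \in I.
Proof.
move=> Dw; have [c cX] := in_weight_X Dw; exists c => p.
pose T i := c i *: xder (ea i) i p.
have -> : D p - \sum_(i in E) T i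
    = (D p - der_expand D p) + \sum_(i < n) p^`M(i) * (D 'X_i - c i *: xb (ea i))
      + \sum_(i | i \notin E) T i.
  rewrite [\sum_(i < n) _ * _](eq_bigr (fun i => p^`M(i) * D 'X_i - T i)); last first.
    by move=> i _; rewrite /T /xder -!mul_mpolyC; ring.
  rewrite sumrB; have -> : \sum_(i < n) T i = \sum_(i in E) T i + \sum_(i | i \notin E) T i.
    exact: bigID.
  by rewrite /der_expand; ring.
apply: (idealD idI); first apply: (idealD idI).
  by case: Dw => derD _; apply: der_quot_expand.
- by apply: (ideal_sum idI) => i _; apply: (idealMl idI).
- apply: (ideal_sum idI (F := T)) => i; rewrite mem_E_set negbK => xI.
  by rewrite /T /xder (idealZ idI) ?(idealMr idI).
Qed.

Lemma xder_E_free (c : 'I_#|E| -> K) :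
  (forall p, \sum_(j < #|E|) c j *: xder (ea (enum_val j)) (enum_val j) p \in I) ->
  forall j, c j = 0.
Proof.
move=> cI j; have := cI 'X_(enum_val j).
rewrite (bigD1 j) //= big1 => [|l lj]; last first.
  rewrite xder_X; case: eqP => [/enum_val_inj jl|_]; last by rewrite scaler0.
  by rewrite jl eqxx in lj.
rewrite xder_X eqxx addr0 => cxI; apply/eqP; apply: contraT => cj.
have : xb (ea (enum_val j)) \notin I by rewrite -mem_E_set enum_valP.
by rewrite -[xb _](scalerK cj) (idealZ idI).
Qed.

Lemma weight_dim_E_set :
  (forall i, i \in E -> in_weight I a (xder (ea i) i)) -> weight_dim I a #|E|.
Proof.
move=> Ew; exists (fun j => xder (ea (enum_val j)) (enum_val j)); split.
- by move=> j; apply/Ew/enum_valP.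
- exact: xder_E_free.
- move=> D /in_weight_span[c cD]; exists (fun j => c (enum_val j)) => p.
  by rewrite -(big_enum_val (fun i => c i *: xder (ea i) i p)).
Qed.

End WeightSpaceDimension.

Lemma E_set_shift (K : fieldType) n (I : pred {mpoly K[n]}) (a : 'I_n -> int) k :
  ~ nonneg a -> nonneg (vadd_int a (unitv k)) ->
  E_set I a = if in_suppc I (vadd_int a (unitv k)) then [set k] else set0.
Proof.
move=> a_neg ak0; have ak : a k < 0.
  apply: contra_notT a_neg; rewrite -leNgt => a_k l.
  case: (eqVneq l k) => [-> //|lk].
  by have := ak0 l; rewrite /vadd_int /unitv (negbTE lk) addr0.
apply/setP => i; rewrite inE; case: (eqVneq i k) => [->|ik].
  by case: ifP; rewrite !inE ?eqxx.
rewrite in_suppc_neg; last first.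
  by move/(_ k); rewrite /vadd_int /unitv eq_sym (negbTE ik) /=; lia.
by case: ifP; rewrite !inE ?(negbTE ik).
Qed.

Unset Implicit Arguments. Set Strict Implicit.

Theorem lemma3p1 (K : fieldType) (n : nat) (I : pred {mpoly K[n]})
  (charK0 : [pchar K] =i pred0)
  (monI : is_monomial_ideal I) (fullI : full_ideal I) (findimI : quot_findim I)
  (alpha : 'I_n -> int) :
  (nonneg alpha -> weight_dim I alpha #|E_set I alpha|) /\
  (forall k : 'I_n,
      ~ nonneg alpha -> nonneg (vadd_int alpha (unitv k)) ->
      weight_dim I (vadd_int alpha (unitv k)) 0 ->
      weight_dim I alpha #|E_set I alpha| /\
      #|E_set I alpha| = (if in_suppc I (vadd_int alpha (unitv k)) then 1 else 0)%N).
Proof.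
have idI : is_ideal I by case: monI.
split=> [alpha0|k alpha_neg alphak0 dim0].
  by apply: weight_dim_E_set => // i _; apply: in_weight_xder_nonneg.
have E_alpha := E_set_shift I alpha_neg alphak0.
split; last by rewrite E_alpha; case: ifP; rewrite ?cards1 ?cards0.
apply: weight_dim_E_set => // i; rewrite E_alpha; case: ifP; rewrite ?inE // => _ /eqP ->.
by apply: in_weight_xder_shift => // j; apply: weight_dim0_xbar.
Qed.
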